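(* Consider a cellular network with $n$ base stations (cells) $\mathcal{N}=\{1,\dots,n\}$, where base station $i$ serves a nonempty set $\mathcal{J}_i$ of users (the sets $\mathcal{J}_i$ are pairwise disjoint), with channel power gains $g_{kj}>0$ from base station $k$ to user $j$ and noise power $\sigma^2>0$. For a power vector $\mathbf{p}>\mathbf{0}$, a load vector $\mathbf{x}\ge\mathbf{0}$ and a rate vector $\mathbf{r}=(r_{ij})_{i\in\mathcal{N},j\in\mathcal{J}_i}>\mathbf{0}$, define $$\mathrm{SINR}_{ij}(\mathbf{x},\mathbf{p})=\frac{p_i g_{ij}}{\sum_{k\in\mathcal{N}\setminus\{i\}} p_k g_{kj} x_k+\sigma^2},\qquad f_i(\mathbf{x};\mathbf{r},\mathbf{p})=\sum_{j\in\mathcal{J}_i}\frac{r_{ij}}{\log\big(1+\mathrm{SINR}_{ij}(\mathbf{x},\mathbf{p})\big)},$$ and $\mathbf{f}=(f_1,\dots,f_n)^T$. Let $\mathbf{d}_{\min}>\mathbf{0}$ be a given minimum-rate vector and consider Problem P0: $$\min_{\mathbf{p}>\mathbf{0},\ \mathbf{r}>\mathbf{0},\ \mathbf{0}<\mathbf{x}\le\mathbf{1}} \mathbf{x}^T\mathbf{p}\quad\text{s.t.}\quad \mathbf{x}=\mathbf{f}(\mathbf{x};\mathbf{r},\mathbf{p}),\quad \mathbf{r}\ge\mathbf{d}_{\min}.$$ Suppose full load is implementable, i.e., there exists $\mathbf{p}>\mathbf{0}$ with $\mathbf{1}=\mathbf{f}(\mathbf{1};\mathbf{d}_{\min},\mathbf{p})$.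 Then the optimal solution $(\mathbf{p}^\star,\mathbf{r}^\star,\mathbf{x}^\star)$ of Problem P0 is as follows: $\mathbf{r}^\star=\mathbf{d}_{\min}$, and $\mathbf{p}^\star$ is such that $\mathbf{x}^\star=\mathbf{1}$; thus $\mathbf{p}^\star$ is given implicitly by $\mathbf{1}=\mathbf{f}(\mathbf{1};\mathbf{d}_{\min},\mathbf{p}^\star)$.
   Context: All vector inequalities are componentwise; $\mathbf{a}>\mathbf{0}$ means every component is strictly positive; $\mathbf{0}$ and $\mathbf{1}$ are the all-zeros and all-ones vectors; $\log$ is the natural logarithm. The quantity $x_i$ is the load of cell $i$ and $p_i$ the transmit power per resource unit of base station $i$; $\mathbf{x}^T\mathbf{p}=\sum_i x_ip_i$ is the sum transmission energy. The equation $\mathbf{x}=\mathbf{f}(\mathbf{x};\mathbf{r},\mathbf{p})$ is called the non-linear load coupling equation (NLCE). *)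

From HB Require Import structures.
From mathcomp Require Import all_boot all_order all_algebra.
From mathcomp Require Import all_classical all_reals all_analysis.
Set Implicit Arguments. Unset Strict Implicit. Unset Printing Implicit Defensive.
Import Order.TTheory GRing.Theory Num.Theory.
Local Open Scope ring_scope.

(* Network model: cells are 'I_n; users form a finite type U, and
   [s j] is the (unique) base station serving user j, so that
   J_i = [set j | s j == i] (pairwise disjoint by construction).  Vectors indexed by cells
   are functions 'I_n -> R; the rate vector r is indexed by users j
   (r j stands for r_{s j, j}). *)
Section Network.
Variables (R : realType) (n : nat) (U : finType).
Variables (s : U -> 'I_n) (g : 'I_n -> U -> R) (sigma2 : R).

Definition SINR (x p : 'I_n -> R) (i : 'I_n) (j : U) : R :=
  p i * g i j / (\sum_(k < n | k != i) p k * g k j * x k + sigma2).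

Definition f_load (x : 'I_n -> R) (r : U -> R) (p : 'I_n -> R) (i : 'I_n) : R :=
  \sum_(j | s j == i) r j / ln (1 + SINR x p i j).

Definition energy (x p : 'I_n -> R) : R := \sum_(i < n) x i * p i.

Definition P0_feasible (dmin : U -> R) (p : 'I_n -> R) (r : U -> R)
    (x : 'I_n -> R) : Prop :=
  (forall i, 0 < p i) /\ (forall j, 0 < r j) /\ (forall i, 0 < x i <= 1) /\
  (forall i, x i = f_load x r p i) /\ (forall j, dmin j <= r j).

Definition P0_optimal (dmin : U -> R) (p : 'I_n -> R) (r : U -> R)
    (x : 'I_n -> R) : Prop :=
  P0_feasible dmin p r x /\
  forall p' r' x', P0_feasible dmin p' r' x' -> energy x p <= energy x' p'.
End Network.

(* Write q := x p for the energy actually spent per cell, so that the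
   objective is sum_i q_i, and let p0 be a full-load power vector.  The
   perspective t |-> t ln (1 + c / t) of the concave map ln (1 + .) is
   increasing, so every feasible point satisfies
   f (1; d_min, q) <= 1 = f (1; d_min, p0), with equality in cell i only if
   x_i = 1 and r = d_min on J_i.  The map p |-> f (1; d_min, p) decreases in
   the own power, increases in the others', and strictly decreases along
   p |-> a p for a > 1 because of the noise; comparing in the cell where
   p0_i / q_i is largest then shows q >= p0.  So the full-load point has
   minimal energy, and an optimum has q = p0, which forces equality
   everywhere. *)

From HB Require Import structures.
From mathcomp Require Import all_boot all_order all_algebra.
From mathcomp Require Import all_classical all_reals all_analysis.
From mathcomp Require Import ring lra.
Set Implicit Arguments. Unset Strict Implicit. Unset Printing Implicit Defensive.
Import Order.TTheory GRing.Theory Num.Theory.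
Local Open Scope ring_scope.

Section LogInequalities.
Variable R : realType.
Implicit Types x y c d r : R.

Lemma ln_le_subr1 y : 0 < y -> ln y <= y - 1.
Proof. by move=> y0; rewrite lerBrDl -[X in _ <= X](lnK y0) expR_ge1Dx. Qed.

Lemma ln_lt_subr1 y : 0 < y -> y != 1 -> ln y < y - 1.
Proof.
move=> y0 y1; rewrite ltrBrDl -[X in _ < X](lnK y0) expR_gt1Dx //.
by rewrite ln_eq0.
Qed.

Lemma perspective_ln1D_leif x c : 0 < x <= 1 -> 0 < c ->
  x * ln (1 + c / x) <= ln (1 + c) ?= iff (x == 1).
Proof.
case/andP=> x0 x1 c0; apply/leifP; have [->|xn1] := eqVneq x 1.
  by rewrite mul1r divr1.
have {xn1}x1 : x < 1 by rewrite lt_neqAle xn1.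
set a := 1 + c / x; set m := 1 + c.
have m0 : 0 < m by rewrite /m; lra.
have a_gt_m : m < a by rewrite /a /m ltrD2l ltr_pdivlMr // gtr_pMr.
have a0 : 0 < a := lt_trans m0 a_gt_m.
have am1 : a / m != 1 by rewrite gt_eqF // ltr_pdivlMr // mul1r.
have Ha := ln_lt_subr1 (divr_gt0 a0 m0) am1.
have Hm : ln m^-1 <= m^-1 - 1 by apply: ln_le_subr1; rewrite invr_gt0.
rewrite ln_div ?lnV ?posrE // in Ha Hm.
(* Weighted by x and 1 - x, the bounds on ln (a / m) and ln (1 / m) add up
   to x ln a - ln m < 0, because x a + (1 - x) = m. *)
have mix : x * (a / m) + (1 - x) * m^-1 = 1.
  by rewrite /a /m; field; rewrite -/m !gt_eqF.
move: Ha Hm mix; set u := a / m; set v := m^-1; set A := ln a; set M := ln m.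
nra.
Qed.

Lemma load_term_leif x c d r : 0 < x <= 1 -> 0 < c -> 0 < d <= r ->
  x * (d / ln (1 + c)) <= r / ln (1 + c / x) ?= iff (d == r) && (x == 1).
Proof.
move=> /[dup] /andP[x0 _] x01 c0 /andP[d0 dr].
have L0 : 0 < ln (1 + c) by apply: ln_gt0; rewrite ltrDl.
have L'0 : 0 < ln (1 + c / x) by apply: ln_gt0; rewrite ltrDl divr_gt0.
apply: leif_trans (_ : _ <= x * (r / ln (1 + c)) ?= iff _) _.
  by rewrite (mono_leif (ler_pM2l x0)) (mono_leif (ler_pM2r _)) ?invr_gt0 //;
    apply: leif_eq.
have r0 : 0 < r := lt_le_trans d0 dr.
set L := ln (1 + c); set L' := ln (1 + c / x).
have -> : x * (r / L) = r / (L * L') * (x * L') by field; rewrite !gt_eqF.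
have -> : r / L' = r / (L * L') * L by field; rewrite !gt_eqF.
rewrite (mono_leif (ler_pM2l _)) ?divr_gt0 ?mulr_gt0 //.
exact: perspective_ln1D_leif.
Qed.
End LogInequalities.

Lemma eq_of_ler_sum (R : numDomainType) (I : finType) (F G : I -> R) :
  (forall i, F i <= G i) -> \sum_i G i <= \sum_i F i -> F =1 G.
Proof.
move=> leFG leGF i.
have [leF eqC] := @leif_sum _ _ xpredT _ F G (fun i _ => leif_eq (leFG i)).
have /forallP/(_ i)/implyP/(_ isT)/eqP // : [forall (i | xpredT i), F i == G i].
by rewrite -eqC eq_le leF.
Qed.

Section Network.
Variables (R : realType) (n : nat) (U : finType).
Variables (s : U -> 'I_n) (g : 'I_n -> U -> R) (sigma2 : R) (dmin : U -> R).
Hypothesis s_surj : forall i, exists j, s j = i.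
Hypothesis g_gt0 : forall k j, 0 < g k j.
Hypothesis sigma2_gt0 : 0 < sigma2.
Hypothesis dmin_gt0 : forall j, 0 < dmin j.

Local Notation sinr := (SINR g sigma2).
Local Notation load := (f_load s g sigma2).
Local Notation ones := (fun _ : 'I_n => 1 : R).

Lemma interference_gt0 (x p : 'I_n -> R) i j :
    (forall k, 0 <= x k) -> (forall k, 0 <= p k) ->
  0 < \sum_(k < n | k != i) p k * g k j * x k + sigma2.
Proof.
move=> x0 p0; rewrite ltr_wpDl // sumr_ge0 // => k _.
by rewrite mulr_ge0 ?mulr_ge0 // ltW.
Qed.

Lemma SINR_gt0 (x p : 'I_n -> R) i j :
  (forall k, 0 <= x k) -> (forall k, 0 < p k) -> 0 < sinr x p i j.
Proof.
by move=> x0 p0; rewrite divr_gt0 ?mulr_gt0 ?interference_gt0 // => k; apply: ltW.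
Qed.

Lemma SINR_scaled (x p : 'I_n -> R) i j :
    (forall k, 0 < x k) -> (forall k, 0 < p k) ->
  sinr x p i j = sinr ones (fun k => x k * p k) i j / x i.
Proof.
move=> x0 p0; rewrite /SINR.
rewrite (eq_bigr (fun k => x k * p k * g k j * 1)) => [|k _]; last by ring.
have I0 : 0 < \sum_(k < n | k != i) x k * p k * g k j * 1 + sigma2.
  by apply: interference_gt0 => // k; rewrite ?mulr_ge0 // ltW.
by field; rewrite !gt_eqF.
Qed.

Lemma load_leif (x p : 'I_n -> R) (r d : U -> R) i :
    (forall k, 0 < x k <= 1) -> (forall k, 0 < p k) ->
    (forall j, 0 < d j <= r j) ->
  x i * load ones d (fun k => x k * p k) i <= load x r p i
    ?= iff [forall (j | s j == i), (d j == r j) && (x i == 1)].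
Proof.
move=> x01 p0 dr; have x0 k : 0 < x k by case/andP: (x01 k).
rewrite /f_load mulr_sumr; apply: leif_sum => j _.
rewrite (SINR_scaled (x := x) (p := p)) //; apply: load_term_leif => //.
by apply: SINR_gt0 => // k; rewrite mulr_gt0.
Qed.

Lemma SINR_ones_lt_scaled a (p q : 'I_n -> R) i j : 1 < a ->
  (forall k, 0 < p k) -> (forall k, 0 < q k) ->
  (forall k, p k <= a * q k) -> p i = a * q i ->
  sinr ones q i j < sinr ones p i j.
Proof.
move=> a1 p0 q0 le_pq pqi.
rewrite /SINR pqi.
set Iq := (X in _ / X < _); set Ip := (X in _ < _ / X).
have Iq0 : 0 < Iq by apply: interference_gt0 => // k; apply: ltW.
have Ip0 : 0 < Ip by apply: interference_gt0 => // k; apply: ltW.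
have Ip_lt : Ip < a * Iq.
  rewrite /Ip /Iq mulrDr mulr_sumr ler_ltD ?ltr_pMl //.
  by apply: ler_sum => k _; rewrite !mulr1 mulrA ler_pM2r.
rewrite ltr_pdivlMr // mulrAC ltr_pdivrMr //.
rewrite -mulrA (_ : _ * _ * Iq = q i * g i j * (a * Iq)); last by ring.
by rewrite -!mulrA !ltr_pM2l.
Qed.

Lemma load_ones_lt (p q : 'I_n -> R) i : (forall k, 0 < q k) ->
  (forall j, s j == i -> sinr ones q i j < sinr ones p i j) ->
  load ones dmin p i < load ones dmin q i.
Proof.
move=> q0 lt_qp; rewrite /f_load; apply: ltr_sum => [|j sj].
  by have [j0 <-] := s_surj i; apply/hasP; exists j0; rewrite ?mem_index_enum.
have Sq0 : 0 < sinr ones q i j by apply: SINR_gt0.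
have Sp0 := lt_trans Sq0 (lt_qp j sj).
by rewrite ltr_pM2l // ltf_pV2 ?posrE ?ln_gt0 ?ltr_ln ?posrE ?ltrD2l ?ltrDl
  ?addr_gt0 ?lt_qp.
Qed.

Lemma load_ones_le_dominates (p q : 'I_n -> R) :
    (forall k, 0 < p k) -> (forall k, 0 < q k) ->
    (forall i, load ones dmin q i <= load ones dmin p i) ->
  forall i, p i <= q i.
Proof.
move=> p0 q0 le_load i; rewrite leNgt; apply/negP => lt_qp.
pose ratio k := p k / q k.
have [m _ ratio_max] := @arg_maxP _ _ _ i xpredT ratio isT.
set a := ratio m in ratio_max.
have a1 : 1 < a.
  by apply: lt_le_trans (ratio_max i isT); rewrite ltr_pdivlMr ?mul1r.
have le_pq k : p k <= a * q k by rewrite -ler_pdivrMr //; apply: ratio_max.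
have pqm : p m = a * q m by rewrite /a /ratio divfK ?gt_eqF.
have := le_load m; rewrite leNgt => /negP; apply.
by apply: load_ones_lt => // j _; apply: SINR_ones_lt_scaled pqm.
Qed.

Lemma full_load_feasible (p : 'I_n -> R) : (forall i, 0 < p i) ->
    (forall i, 1 = load ones dmin p i) -> P0_feasible s g sigma2 dmin p dmin ones.
Proof. by move=> p_gt0 full; do !split=> //; move=> *; rewrite ?ltr01 ?lexx. Qed.

Lemma feasible_load_leif (p : 'I_n -> R) r x i :
    P0_feasible s g sigma2 dmin p r x ->
  x i * load ones dmin (fun k => x k * p k) i <= x i
    ?= iff [forall (j | s j == i), (dmin j == r j) && (x i == 1)].
Proof.
case=> p_gt0 [_ [x01 [x_fix dr]]]; rewrite [X in _ <= X ?= iff _]x_fix.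
by apply: load_leif => // j; rewrite dmin_gt0 dr.
Qed.

Lemma feasible_dominates (p0 p : 'I_n -> R) r x : (forall i, 0 < p0 i) ->
    (forall i, 1 = load ones dmin p0 i) -> P0_feasible s g sigma2 dmin p r x ->
  forall i, p0 i <= x i * p i.
Proof.
move=> p0_gt0 full0 feas; have [p_gt0 [_ [x01 _]]] := feas.
have x0 k : 0 < x k by case/andP: (x01 k).
apply: load_ones_le_dominates => // [k|i]; first by rewrite mulr_gt0.
rewrite -full0 -(ler_pM2l (x0 i)) mulr1.
exact: (feasible_load_leif i feas).1.
Qed.

End Network.

Theorem theorem1 (R : realType) (n : nat) (U : finType)
  (s : U -> 'I_n) (g : 'I_n -> U -> R) (sigma2 : R) (dmin : U -> R)
  (Hne : forall i : 'I_n, exists j : U, s j = i)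
  (Hg : forall (k : 'I_n) (j : U), 0 < g k j)
  (Hsigma : 0 < sigma2)
  (Hd : forall j : U, 0 < dmin j)
  (Hfull : exists p : 'I_n -> R, (forall i, 0 < p i) /\
             forall i, 1 = f_load s g sigma2 (fun _ => 1) dmin p i) :
  forall (p : 'I_n -> R) (r : U -> R) (x : 'I_n -> R),
    P0_optimal s g sigma2 dmin p r x <->
    [/\ r = dmin, x = (fun _ => 1), (forall i, 0 < p i) &
        forall i, 1 = f_load s g sigma2 (fun _ => 1) dmin p i].
Proof.
have dominates := feasible_dominates Hne Hg Hsigma Hd.
move=> p r x; split; last first.
  case=> -> -> p_gt0 full; split=> [|p' r' x' feas'].
    exact: (full_load_feasible Hd p_gt0 full).
  by apply: ler_sum => i _; rewrite mul1r (dominates _ _ _ _ p_gt0 full feas').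
case=> feas opt; have [p0 [p0_gt0 full0]] := Hfull.
have xp_p0 : (fun k => x k * p k) = p0.
  apply/funext => k.
  apply/esym/(eq_of_ler_sum (dominates _ _ _ _ p0_gt0 full0 feas)).
  have := opt _ _ _ (full_load_feasible Hd p0_gt0 full0).
  by rewrite /energy; under [X in _ <= X]eq_bigr do rewrite mul1r.
have tight j : dmin j = r j /\ x (s j) = 1.
  have := (feasible_load_leif Hg Hsigma Hd (s j) feas).2.
  rewrite xp_p0 -full0 mulr1 eqxx => /esym/forallP/(_ j).
  by rewrite eqxx => /andP[/eqP -> /eqP ->].
have x_ones : x = (fun _ => 1).
  by apply/funext => i; have [j <-] := Hne i; exact: (tight j).2.
have p_p0 : p = p0 by apply/funext => k; rewrite -xp_p0 x_ones mul1r.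
by subst x p; split=> //; apply/funext => j; rewrite (tight j).1.
Qed.
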